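(* Let $A\in\mathbb{R}^{n\times n}$ be such that $\Lambda_1$ is complex and use the Euclidean norm (with induced spectral matrix norm). For $y_0\in\mathbb{R}^n$ with $w^{(1)}y_0\neq0$, $$a_{\min}(V_1,W_1)\le\mathrm{OT}(t,y_0)\le a_{\max}(V_1,W_1)\qquad\text{for all }t\in\mathbb{R},$$ where $a_{\min}(V_1,W_1)=\sqrt{\frac{(1+W_1)(1-V_1)}{2(1+V_1)}}$ if $V_1\le W_1$, $a_{\min}(V_1,W_1)=\sqrt{\frac{1-W_1}{2}}$ if $V_1\ge W_1$, and $a_{\max}(V_1,W_1)=\sqrt{\frac{(1+W_1)(1+V_1)}{2(1-V_1)}}$. Moreover, if $\gamma_1(\hat y_0)-\theta_1$ is an odd multiple of $\pi/2$, then $\min_{t\in\mathbb{R}}\mathrm{OT}(t,y_0)=a_{\min}(V_1,W_1)$ and $\max_{t\in\mathbb{R}}\mathrm{OT}(t,y_0)=a_{\max}(V_1,W_1)$.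
   Context: $\Lambda_1$ complex: the eigenvalues of $A$ with maximal real part are exactly a pair of simple complex conjugate eigenvalues $\lambda_1,\overline{\lambda_1}$, $\omega_1=\operatorname{Im}\lambda_1>0$. $w^{(1)}$ (row), $v^{(1)}$ (column) left/right eigenvectors for $\lambda_1$; $\hat w^{(1)}=w^{(1)}/\|w^{(1)}\|_2$, $\hat v^{(1)}=v^{(1)}/\|v^{(1)}\|_2$. $V_1=|(\hat v^{(1)})^T\hat v^{(1)}|$, $W_1=|\hat w^{(1)}(\hat w^{(1)})^T|$ ($^T$ without conjugation), both in $[0,1)$. Polar forms $\hat v^{(1)}_k=|\hat v^{(1)}_k|e^{\sqrt{-1}\alpha_{1k}}$, $\hat w^{(1)}_l=|\hat w^{(1)}_l|e^{\sqrt{-1}\beta_{1l}}$, $\hat w^{(1)}u=|\hat w^{(1)}u|e^{\sqrt{-1}\gamma_1(u)}$ for real $u$ with $w^{(1)}u\neq0$. $\hat y_0=y_0/\|y_0\|_2$. $\hat\Theta_1(t,u)=(|\hat v^{(1)}_k|\cos(\omega_1t+\alpha_{1k}+\gamma_1(u)))_{k}$, $\hat\Theta_1(t)=(|\hat v^{(1)}_k||\hat w^{(1)}_l|\cos(\omega_1t+\alpha_{1k}+\beta_{1l}))_{k,l}$, $\mathrm{OT}(t,y_0)=\|\hat\Theta_1(t)\|_2/\|\hat\Theta_1(t,\hat y_0)\|_2$. Let $R_1=\begin{bmatrix}\operatorname{Re}\hat w^{(1)}\\ \operatorname{Im}\hat w^{(1)}\end{bmatrix}\in\mathbb{R}^{2\times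 n}$ with largest singular value $\sigma_1$ and corresponding left singular vector $\alpha^{(1)}\in\mathbb{R}^2$; identifying $\mathbb{R}^2$ with $\mathbb{C}$, $\theta_1$ is the angle between the positive real axis and the vector $\sigma_1\alpha^{(1)}$ (the major semi-axis of the ellipse $\{\hat w^{(1)}u: u\in\mathbb{R}^n,\|u\|_2=1\}$ boundary). *)

From HB Require Import structures.
From mathcomp Require Import all_boot all_order all_algebra.
From mathcomp Require Import complex.
From mathcomp Require Import all_classical all_reals all_analysis.
Set Implicit Arguments. Unset Strict Implicit. Unset Printing Implicit Defensive.
Import Order.TTheory GRing.Theory Num.Theory.
Local Open Scope ring_scope.

Section Defs.
Variable R : realType.

Definition cmod (z : R[i]) : R := Num.sqrt (complex.Re z ^+ 2 + complex.Im z ^+ 2).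

Definition expi (th : R) : R[i] := Complex (cos th) (sin th).

Definition cplx_mx m n (M : 'M[R]_(m, n)) : 'M[R[i]]_(m, n) :=
  map_mx (fun x => Complex x 0) M.

Definition rnorm2 m n (x : 'M[R]_(m, n)) : R :=
  Num.sqrt (\sum_i \sum_j x i j ^+ 2).
Definition cnorm2 m n (x : 'M[R[i]]_(m, n)) : R :=
  Num.sqrt (\sum_i \sum_j cmod (x i j) ^+ 2).

Definition specnorm m n (M : 'M[R]_(m, n)) : R :=
  sup [set rnorm2 (M *m u) | u in [set u : 'cV[R]_n | rnorm2 u = 1]].

Definition is_eigenvalue n (A : 'M[R]_n) (mu : R[i]) : Prop :=
  root (char_poly (cplx_mx A)) mu.
Definition alg_mult n (A : 'M[R]_n) (mu : R[i]) : nat :=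
  mup mu (char_poly (cplx_mx A)).

Definition Lambda1_complex n (A : 'M[R]_n) (lam : R[i]) : Prop :=
  [/\ is_eigenvalue A lam, 0 < complex.Im lam,
      alg_mult A lam = 1%N, alg_mult A (conjc lam) = 1%N &
      forall mu, is_eigenvalue A mu ->
        complex.Re mu <= complex.Re lam /\ (complex.Re mu = complex.Re lam -> mu = lam \/ mu = conjc lam)].

Definition a_min (V W : R) : R :=
  if V <= W then Num.sqrt ((1 + W) * (1 - V) / (2 * (1 + V)))
  else Num.sqrt ((1 - W) / 2).

Definition a_max (V W : R) : R :=
  Num.sqrt ((1 + W) * (1 + V) / (2 * (1 - V))).

End Defs.

From HB Require Import structures.
From mathcomp Require Import all_boot all_order all_algebra.
From mathcomp Require Import complex.
From mathcomp Require Import all_classical all_reals all_analysis.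
From mathcomp Require Import ring lra.
Import Order.TTheory GRing.Theory Num.Theory.
Set Implicit Arguments. Unset Strict Implicit. Unset Printing Implicit Defensive.
Local Open Scope ring_scope.

(* Write [vh = a + i b] and [wh = c0 + i d0]; let [P + i Q = e^(i (om t + theta)) vh] and
   [c + i d = e^(-i theta) wh].  Then [Theta t = P c^T - Q d^T] and
   [Theta_u t = P cos (gam - theta) - Q sin (gam - theta)], while [theta] being the major
   axis of [wh] makes [c] and [d] orthogonal with [|c|^2 = (1 + W1) / 2] and
   [|d|^2 = (1 - W1) / 2].  The map [u |-> (c.u, d.u)] sends the unit sphere onto the filled
   ellipse [x^2 / |c|^2 + y^2 / |d|^2 <= 1], and [|Theta t u|^2 = |x P - y Q|^2] is a
   quadratic form in [(x, y)] with eigenvalues [(1 -+ V1) / 2], independently of [t].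
   Bounding it on the ellipse, and evaluating it on the major axis and in the direction of
   [Theta_u t], gives the two bounds.  When [gam - theta] is an odd multiple of [pi / 2],
   the time at which [P] and [Q] are orthogonal with [|P|^2 = (1 + V1) / 2], resp.
   [(1 - V1) / 2], makes the form diagonal in the axes of the ellipse, and the bounds are
   attained.  Finally [V1, W1 < 1] because the real and imaginary parts of an eigenvector for
   a nonreal eigenvalue are linearly independent. *)

Section Dot.
Variables (R : realType) (n : nat).
Implicit Types (f g a b u : 'I_n -> R).

Definition dot f g : R := \sum_k f k * g k.

Lemma dotC f g : dot f g = dot g f.
Proof. by apply: eq_bigr => k _; rewrite mulrC. Qed.

Lemma dot_ge0 f : 0 <= dot f f.
Proof. by apply: sumr_ge0 => k _; rewrite -expr2 sqr_ge0. Qed.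

Lemma dot_combl f a b u x y : (forall k, f k = x * a k + y * b k) ->
  dot f u = x * dot a u + y * dot b u.
Proof.
move=> hf; rewrite /dot !mulr_sumr -big_split /=.
by apply: eq_bigr => k _; rewrite hf; ring.
Qed.

Lemma dot_comb f g a b x1 y1 x2 y2 :
  (forall k, f k = x1 * a k + y1 * b k) -> (forall k, g k = x2 * a k + y2 * b k) ->
  dot f g = x1 * x2 * dot a a + (x1 * y2 + y1 * x2) * dot a b + y1 * y2 * dot b b.
Proof.
move=> hf hg; rewrite (dot_combl g hf) ![dot _ g]dotC.
by rewrite (dot_combl a hg) (dot_combl b hg) [dot b a]dotC; ring.
Qed.

Lemma lagrange_identity a b :
  \sum_k \sum_l (a k * b l - a l * b k) ^+ 2 = 2 * (dot a a * dot b b - dot a b ^+ 2).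
Proof.
transitivity (\sum_k (a k * a k * dot b b - 2 * (a k * b k) * dot a b + b k * b k * dot a a)).
  apply: eq_bigr => k _; rewrite /dot !mulr_sumr -!sumrB -big_split /=.
  by apply: eq_bigr => l _; ring.
by rewrite big_split sumrB /= -!mulr_suml -mulr_sumr /dot; ring.
Qed.

Lemma cauchy_schwarz a b : dot a b ^+ 2 <= dot a a * dot b b.
Proof.
have : 0 <= \sum_k \sum_l (a k * b l - a l * b k) ^+ 2.
  by apply: sumr_ge0 => k _; apply: sumr_ge0 => l _; apply: sqr_ge0.
rewrite lagrange_identity; lra.
Qed.

Definition disc a b : R := Num.sqrt ((dot a a - dot b b) ^+ 2 + (2 * dot a b) ^+ 2).

Lemma disc_ge0 a b : 0 <= disc a b.
Proof. exact: sqrtr_ge0. Qed.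

Lemma sqr_disc a b : disc a b ^+ 2 = (dot a a - dot b b) ^+ 2 + (2 * dot a b) ^+ 2.
Proof. by rewrite sqr_sqrtr // addr_ge0 ?sqr_ge0. Qed.

Lemma disc_lt1 a b : dot a a + dot b b = 1 ->
  dot a b ^+ 2 < dot a a * dot b b -> disc a b < 1.
Proof.
move=> h1 hlt; rewrite -(ltr_pXn2r (_ : 0 < 2)%N) ?nnegrE ?disc_ge0 //.
by rewrite sqr_disc expr1n; nra.
Qed.

(* [a + i b] is an eigenvector of the real operator [K] for [mu + i om]. *)
Lemma cauchy_schwarz_lt_eigen (K : 'I_n -> 'I_n -> R) a b mu om : om != 0 ->
  (forall k, \sum_j K k j * a j = mu * a k - om * b k) ->
  (forall k, \sum_j K k j * b j = om * a k + mu * b k) ->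
  dot a a + dot b b = 1 -> dot a b ^+ 2 < dot a a * dot b b.
Proof.
move=> om0 hA hB h1; rewrite ltNge; apply/negP => hle.
have L0 : \sum_k \sum_l (a k * b l - a l * b k) ^+ 2 = 0.
  apply/eqP; rewrite eq_le; apply/andP; split; first by rewrite lagrange_identity; lra.
  by apply: sumr_ge0 => k _; apply: sumr_ge0 => l _; apply: sqr_ge0.
have minor0 k l : a k * b l - a l * b k = 0.
  apply/eqP; rewrite -sqrf_eq0; apply/eqP.
  have row0 : \sum_l (a k * b l - a l * b k) ^+ 2 = 0.
    apply: (psumr_eq0P _ L0) => // i _.
    by apply: sumr_ge0 => j _; apply: sqr_ge0.
  by apply: (psumr_eq0P _ row0) => // j _; apply: sqr_ge0.
have ab0 k : a k * a k + b k * b k = 0.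
  have : om * (a k * a k + b k * b k) = \sum_j K k j * (a k * b j - a j * b k).
    rewrite [RHS](_ : _ = a k * (\sum_j K k j * b j) - b k * (\sum_j K k j * a j)).
      by rewrite hA hB; ring.
    by rewrite !mulr_sumr -sumrB; apply: eq_bigr => j _; ring.
  rewrite big1 => [/eqP|j _]; last by rewrite minor0 mulr0.
  by rewrite mulf_eq0 (negbTE om0) => /eqP.
move: h1; rewrite /dot -big_split big1 => [/eqP|k _ /=]; last exact: ab0.
by rewrite eq_sym oner_eq0.
Qed.

Definition rot_re (s : R) a b : 'I_n -> R := fun k => cos s * a k - sin s * b k.
Definition rot_im (s : R) a b : 'I_n -> R := fun k => sin s * a k + cos s * b k.

Lemma rot_reE s a b k : rot_re s a b k = cos s * a k + - sin s * b k.
Proof. by rewrite mulNr. Qed.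

Lemma rot_imE s a b k : rot_im s a b k = sin s * a k + cos s * b k.
Proof. by []. Qed.

Section Rotation.
Variables (s : R) (a b : 'I_n -> R).
Local Notation P := (rot_re s a b).
Local Notation Q := (rot_im s a b).

Lemma dot_rot_re u : dot P u = cos s * dot a u - sin s * dot b u.
Proof. by rewrite (dot_combl u (rot_reE s a b)) mulNr. Qed.

Lemma dot_rot_im u : dot Q u = sin s * dot a u + cos s * dot b u.
Proof. exact: dot_combl. Qed.

Let dotPP := dot_comb (rot_reE s a b) (rot_reE s a b).
Let dotPQ := dot_comb (rot_reE s a b) (rot_imE s a b).
Let dotQQ := dot_comb (rot_imE s a b) (rot_imE s a b).

Lemma dot_rot_sqr u : dot P u ^+ 2 + dot Q u ^+ 2 = dot a u ^+ 2 + dot b u ^+ 2.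
Proof. by rewrite dot_rot_re dot_rot_im -[RHS]mul1r -(cos2Dsin2 s); ring. Qed.

Lemma dot_rot_trace : dot P P + dot Q Q = dot a a + dot b b.
Proof. by rewrite dotPP dotQQ -[RHS]mul1r -(cos2Dsin2 s); ring. Qed.

(* [|P|^2 - |Q|^2 + 2 i P.Q] is [|a|^2 - |b|^2 + 2 i a.b] turned by the angle [2 s]. *)
Lemma dot_rot_diff : dot P P - dot Q Q =
  cos (2 * s) * (dot a a - dot b b) - sin (2 * s) * (2 * dot a b).
Proof. by rewrite dotPP dotQQ (_ : 2 * s = s + s) ?cosD ?sinD; ring. Qed.

Lemma dot_rot_cross : 2 * dot P Q =
  sin (2 * s) * (dot a a - dot b b) + cos (2 * s) * (2 * dot a b).
Proof. by rewrite dotPQ (_ : 2 * s = s + s) ?cosD ?sinD; ring. Qed.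

Lemma disc_rot : disc P Q = disc a b.
Proof.
rewrite /disc dot_rot_diff dot_rot_cross; congr Num.sqrt.
transitivity ((cos (2 * s) ^+ 2 + sin (2 * s) ^+ 2) *
  ((dot a a - dot b b) ^+ 2 + (2 * dot a b) ^+ 2)); first by ring.
by rewrite cos2Dsin2 mul1r.
Qed.
End Rotation.

Lemma rot_polar (r phi : 'I_n -> R) a b s :
  (forall k, a k = r k * cos (phi k)) -> (forall k, b k = r k * sin (phi k)) ->
  forall k, rot_re s a b k = r k * cos (phi k + s) /\ rot_im s a b k = r k * sin (phi k + s).
Proof. by move=> ha hb k; rewrite /rot_re /rot_im ha hb cosD sinD; split; ring. Qed.
End Dot.

Lemma ellipse_sqr_le (R : realType) (x y l m K : R) : 0 < l -> 0 < m ->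
  x ^+ 2 / l + y ^+ 2 / m <= 1 -> l <= K -> m <= K -> x ^+ 2 + y ^+ 2 <= K.
Proof.
move=> l0 m0 hE hl hm.
rewrite -[x ^+ 2](mulfVK (x := l)) ?gt_eqF // -[y ^+ 2](mulfVK (x := m)) ?gt_eqF //.
move: hE; set X := x ^+ 2 / l; set Y := y ^+ 2 / m => hE.
have X0 : 0 <= X by rewrite divr_ge0 ?sqr_ge0 // ltW.
have Y0 : 0 <= Y by rewrite divr_ge0 ?sqr_ge0 // ltW.
have := ler_wpM2l X0 hl; have := ler_wpM2l Y0 hm; nra.
Qed.

Section Ellipse.
Variables (R : realType) (n : nat).
Implicit Types (P Q c d : 'I_n -> R).

Definition qform P Q (x y : R) : R :=
  dot (fun k => P k * x - Q k * y) (fun k => P k * x - Q k * y).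

Lemma qformE P Q x y :
  qform P Q x y = dot P P * x ^+ 2 - 2 * dot P Q * x * y + dot Q Q * y ^+ 2.
Proof.
have hk k : P k * x - Q k * y = x * P k + - y * Q k by ring.
by rewrite /qform (dot_comb hk hk); ring.
Qed.

Lemma qformZ P Q k x y : qform P Q (k * x) (k * y) = k ^+ 2 * qform P Q x y.
Proof. by rewrite !qformE; ring. Qed.

(* The eigenvalues of the Gram matrix of [P, Q] are [(1 -+ disc P Q) / 2]. *)
Lemma qform_bounds P Q x y : dot P P + dot Q Q = 1 ->
  (1 - disc P Q) / 2 * (x ^+ 2 + y ^+ 2) <= qform P Q x y
  <= (1 + disc P Q) / 2 * (x ^+ 2 + y ^+ 2).
Proof.
move=> h1; set V := disc P Q; set X := dot P P - dot Q Q; set Y := 2 * dot P Q.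
have hV : V ^+ 2 = X ^+ 2 + Y ^+ 2 by rewrite sqr_disc.
have eF : qform P Q x y = ((x ^+ 2 + y ^+ 2) + (X * (x ^+ 2 - y ^+ 2) - Y * (2 * x * y))) / 2.
  by rewrite qformE /X /Y (_ : dot Q Q = 1 - dot P P); [field | lra].
have key : (X * (x ^+ 2 - y ^+ 2) - Y * (2 * x * y)) ^+ 2 <= (V * (x ^+ 2 + y ^+ 2)) ^+ 2.
  rewrite (_ : (V * _) ^+ 2 = (X * (x ^+ 2 - y ^+ 2) - Y * (2 * x * y)) ^+ 2
    + (X * (2 * x * y) + Y * (x ^+ 2 - y ^+ 2)) ^+ 2) ?lerDl ?sqr_ge0 //.
  by rewrite exprMn hV; ring.
move: key eF; set S := x ^+ 2 + y ^+ 2; set A := X * _ - _ => key ->.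
have S0 : 0 <= S by rewrite addr_ge0 ?sqr_ge0.
have V0 : 0 <= V by exact: disc_ge0.
have VS0 : 0 <= V * S by exact: mulr_ge0.
have /andP[hl hr] : - (V * S) <= A <= V * S by apply/andP; split; nra.
by apply/andP; split; lra.
Qed.

Definition colv (u : 'cV[R]_n) : 'I_n -> R := fun k => u k ord0.

Lemma rnorm2_cV (u : 'cV[R]_n) : rnorm2 u = Num.sqrt (dot (colv u) (colv u)).
Proof. by congr Num.sqrt; apply: eq_bigr => k _; rewrite big_ord1 expr2. Qed.

Lemma rnorm2_outer P Q c d (u : 'cV[R]_n) :
  rnorm2 ((\matrix_(k, l) (P k * c l - Q k * d l)) *m u) =
  Num.sqrt (qform P Q (dot c (colv u)) (dot d (colv u))).
Proof.
rewrite rnorm2_cV; congr (Num.sqrt (dot _ _)); apply/funext => k;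
  rewrite /colv mxE /dot !mulr_sumr -sumrB; apply: eq_bigr => l _; rewrite mxE; ring.
Qed.

Section Orthogonal.
Variables (c d : 'I_n -> R).
Hypotheses (cd0 : dot c d = 0) (cc0 : 0 < dot c c) (dd0 : 0 < dot d d).

Lemma bessel2 u : dot c u ^+ 2 / dot c c + dot d u ^+ 2 / dot d d <= dot u u.
Proof.
set x := dot c u / dot c c; set y := dot d u / dot d d.
set K := dot c u ^+ 2 / dot c c + dot d u ^+ 2 / dot d d.
have hz k : x * c k + y * d k = x * c k + y * d k by [].
have := cauchy_schwarz (fun k => x * c k + y * d k) u.
rewrite (dot_combl u hz) (dot_comb hz hz) cd0.
have -> : x * dot c u + y * dot d u = K by rewrite /K /x /y; field; rewrite !gt_eqF.
have -> : x * x * dot c c + (x * y + y * x) * 0 + y * y * dot d d = K.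
  by rewrite /K /x /y; field; rewrite !gt_eqF.
have K0 : 0 <= K by rewrite /K addr_ge0 // divr_ge0 ?sqr_ge0 // ltW.
have := dot_ge0 u; nra.
Qed.

Lemma bessel2_unit (u : 'cV[R]_n) : rnorm2 u = 1 ->
  dot c (colv u) ^+ 2 / dot c c + dot d (colv u) ^+ 2 / dot d d <= 1.
Proof.
move=> hu; have := bessel2 (colv u).
by rewrite -(sqr_sqrtr (dot_ge0 (colv u))) -rnorm2_cV hu expr1n.
Qed.

Lemma ellipse_attained x y : x ^+ 2 / dot c c + y ^+ 2 / dot d d = 1 ->
  exists u : 'cV[R]_n, [/\ rnorm2 u = 1, dot c (colv u) = x & dot d (colv u) = y].
Proof.
move=> hxy; exists (\col_k (x / dot c c * c k + y / dot d d * d k)).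
have hu k : colv (\col_k (x / dot c c * c k + y / dot d d * d k)) k =
  x / dot c c * c k + y / dot d d * d k by rewrite /colv mxE.
rewrite rnorm2_cV (dot_comb hu hu) ![dot _ (colv _)]dotC !(dot_combl _ hu).
rewrite [dot d c]dotC cd0 !mulr0 !addr0; split.
- by rewrite -[RHS]sqrtr1 -hxy; congr Num.sqrt; field; rewrite !gt_eqF.
- by rewrite mulfVK // gt_eqF.
- by rewrite add0r mulfVK // gt_eqF.
Qed.
End Orthogonal.
End Ellipse.

Section SpectralNorm.
Variables (R : realType) (m n : nat) (M : 'M[R]_(m, n)).

Lemma specnorm_le U : (exists u : 'cV[R]_n, rnorm2 u = 1) ->
  (forall u : 'cV[R]_n, rnorm2 u = 1 -> rnorm2 (M *m u) <= U) -> specnorm M <= U.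
Proof.
move=> [u hu] hU; rewrite /specnorm; apply: ge_sup; first by exists (rnorm2 (M *m u)), u.
by move=> _ [v hv <-]; exact: hU.
Qed.

Lemma le_specnorm U (u : 'cV[R]_n) : (forall v : 'cV[R]_n, rnorm2 v = 1 -> rnorm2 (M *m v) <= U) ->
  rnorm2 u = 1 -> rnorm2 (M *m u) <= specnorm M.
Proof.
move=> hU hu; rewrite /specnorm; apply: sup_upper_bound; last by exists u.
split; first by exists (rnorm2 (M *m u)), u.
by exists U => _ [v hv <-]; exact: hU.
Qed.
End SpectralNorm.

Lemma div_sqrt_le (R : realType) (s D K : R) : 0 < D -> 0 <= K ->
  s <= Num.sqrt (K * D) -> s / Num.sqrt D <= Num.sqrt K.
Proof. by move=> D0 K0; rewrite sqrtrM // ler_pdivrMr ?sqrtr_gt0. Qed.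

Lemma le_div_sqrt (R : realType) (s D K : R) : 0 < D -> 0 <= K ->
  Num.sqrt (K * D) <= s -> Num.sqrt K <= s / Num.sqrt D.
Proof. by move=> D0 K0; rewrite sqrtrM // ler_pdivlMr ?sqrtr_gt0. Qed.

Section Ratio.
Variables (R : realType) (n : nat) (P Q c d : 'I_n -> R) (W x0 y0 : R).
Hypotheses (hPQ : dot P P + dot Q Q = 1) (hV1 : disc P Q < 1)
  (cd0 : dot c d = 0) (hcc : dot c c = (1 + W) / 2) (hdd : dot d d = (1 - W) / 2)
  (W0 : 0 <= W) (W1 : W < 1) (hxy0 : x0 ^+ 2 + y0 ^+ 2 = 1).

Local Notation V := (disc P Q).
Local Notation Th := (\matrix_(k, l) (P k * c l - Q k * d l) : 'M[R]_n).
Local Notation Tu := (\col_k (P k * x0 - Q k * y0) : 'cV[R]_n).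
Local Notation D := (qform P Q x0 y0).

Let cc0 : 0 < dot c c. Proof. by rewrite hcc; move: W0; lra. Qed.
Let dd0 : 0 < dot d d. Proof. by rewrite hdd; move: W1; lra. Qed.
Let V0 : 0 <= V. Proof. exact: disc_ge0. Qed.

Lemma rnorm2_comb : rnorm2 Tu = Num.sqrt D.
Proof.
rewrite rnorm2_cV; congr Num.sqrt.
by apply: eq_bigr => k _; rewrite /colv mxE.
Qed.

Lemma qform_unit_bounds : (1 - V) / 2 <= D <= (1 + V) / 2.
Proof. by have := qform_bounds x0 y0 hPQ; rewrite hxy0 !mulr1. Qed.

Let D_pos : 0 < D.
Proof. by have /andP[hD _] := qform_unit_bounds; move: V0 hV1 hD; lra. Qed.

Lemma outer_unit_le (u : 'cV[R]_n) : rnorm2 u = 1 ->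
  rnorm2 (Th *m u) <= Num.sqrt ((1 + W) / 2 * ((1 + V) / 2)).
Proof.
move=> hu; rewrite rnorm2_outer ler_sqrt; last by rewrite mulr_ge0 //; move: W0 V0; lra.
have := bessel2_unit cd0 cc0 dd0 hu; set x := dot c _; set y := dot d _ => hE.
have /andP[_ hF] := qform_bounds x y hPQ.
apply: (le_trans hF); rewrite mulrC ler_wpM2r //; first by move: V0; lra.
by apply: ellipse_sqr_le cc0 dd0 hE _ _; rewrite ?hcc ?hdd; move: W0; lra.
Qed.

Lemma le_specnorm_outer (u : 'cV[R]_n) : rnorm2 u = 1 ->
  rnorm2 (Th *m u) <= specnorm Th.
Proof. exact: le_specnorm outer_unit_le. Qed.

Lemma major_axis_attained : exists u : 'cV[R]_n,
  [/\ rnorm2 u = 1, dot c (colv u) = Num.sqrt (dot c c) & dot d (colv u) = 0].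
Proof.
apply: ellipse_attained => //.
by rewrite sqr_sqrtr ?ltW // divff ?gt_eqF // expr0n /= mul0r addr0.
Qed.

Lemma major_axis_le_specnorm : Num.sqrt ((1 + W) / 2 * dot P P) <= specnorm Th.
Proof.
have [u [hu hx hy]] := major_axis_attained.
suff -> : Num.sqrt ((1 + W) / 2 * dot P P) = rnorm2 (Th *m u).
  exact: le_specnorm_outer.
by rewrite rnorm2_outer hx hy qformE sqr_sqrtr ?ltW // hcc; congr Num.sqrt; ring.
Qed.

Lemma specnorm_outer_le : specnorm Th <= Num.sqrt ((1 + W) / 2 * ((1 + V) / 2)).
Proof.
apply: specnorm_le outer_unit_le.
by have [u [hu _ _]] := major_axis_attained; exists u.
Qed.

Lemma diagonal_specnorm_le K : dot P Q = 0 ->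
  (1 + W) / 2 * dot P P <= K -> (1 - W) / 2 * dot Q Q <= K -> specnorm Th <= Num.sqrt K.
Proof.
move=> hpq hK1 hK2; apply: specnorm_le; first by have [u [hu _ _]] := major_axis_attained; exists u.
move=> u hu; have K0 : 0 <= K.
  by apply: le_trans hK1; rewrite mulr_ge0 ?dot_ge0 //; move: W0; lra.
rewrite rnorm2_outer ler_sqrt // qformE hpq mulr0 !mul0r subr0.
have := bessel2_unit cd0 cc0 dd0 hu; set x := dot c _; set y := dot d _ => hE.
rewrite -[x ^+ 2](mulfVK (x := dot c c)) ?gt_eqF // -[y ^+ 2](mulfVK (x := dot d d)) ?gt_eqF //.
move: hE; set X := x ^+ 2 / _; set Y := y ^+ 2 / _ => hE.
have X0 : 0 <= X by rewrite divr_ge0 ?sqr_ge0 // ltW.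
have Y0 : 0 <= Y by rewrite divr_ge0 ?sqr_ge0 // ltW.
move: hK1 hK2; rewrite -hcc -hdd => hK1 hK2.
have := ler_wpM2r X0 hK1; have := ler_wpM2r Y0 hK2; have := ler_wpM2l K0 hE; nra.
Qed.

Lemma direction_le_specnorm : Num.sqrt ((1 - W) / 2 * D) <= specnorm Th.
Proof.
set X := x0 ^+ 2 / dot c c; set Y := y0 ^+ 2 / dot d d.
have hx : x0 ^+ 2 = dot c c * X by rewrite mulrC mulfVK ?gt_eqF.
have hy : y0 ^+ 2 = dot d d * Y by rewrite mulrC mulfVK ?gt_eqF.
have X0 : 0 <= X by rewrite divr_ge0 ?sqr_ge0 // ltW.
have Y0 : 0 <= Y by rewrite divr_ge0 ?sqr_ge0 // ltW.
have hXY : dot c c * X + dot d d * Y = 1 by rewrite -hx -hy.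
move: hXY; rewrite hcc hdd => hXY.
have E0 : 0 < X + Y by move: W0 W1; nra.
have hE : (1 - W) / 2 * (X + Y) <= 1 by move: W0 W1; nra.
set k := (Num.sqrt (X + Y))^-1.
have hk : k ^+ 2 = (X + Y)^-1 by rewrite exprVn sqr_sqrtr ?ltW.
have [|u [hu hxu hyu]] := @ellipse_attained _ _ c d cd0 cc0 dd0 (k * x0) (k * y0).
  rewrite (_ : _ + _ = k ^+ 2 * (X + Y)); last by rewrite /X /Y; ring.
  by rewrite hk mulVf ?gt_eqF.
apply: le_trans (le_specnorm_outer hu).
rewrite rnorm2_outer hxu hyu qformZ hk ler_sqrt; last by rewrite mulr_ge0 ?invr_ge0 ?ltW.
apply: ler_wpM2r; first exact: ltW.
by rewrite -(ler_pM2l E0) mulfV ?gt_eqF // mulrC.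
Qed.

Let dotPP_ge : (1 - V) / 2 <= dot P P.
Proof.
have /andP[+ _] := qform_bounds 1 0 hPQ.
by rewrite qformE; congr (_ <= _); ring.
Qed.

Lemma ratio_le_amax : specnorm Th / rnorm2 Tu <= a_max V W.
Proof.
have /andP[hD _] := qform_unit_bounds.
have A0 : 0 <= (1 + W) * (1 + V) / (2 * (1 - V)).
  by rewrite divr_ge0 ?mulr_ge0 //; move: W0 V0 hV1; lra.
rewrite rnorm2_comb /a_max; apply: div_sqrt_le => //.
apply: (le_trans specnorm_outer_le); rewrite ler_sqrt; last exact: mulr_ge0 (ltW D_pos).
rewrite (_ : _ * _ = (1 + W) * (1 + V) / (2 * (1 - V)) * ((1 - V) / 2)).
  exact: ler_wpM2l.
by field; move: hV1; lra.
Qed.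

Lemma amin_le_ratio : a_min V W <= specnorm Th / rnorm2 Tu.
Proof.
have /andP[_ hD] := qform_unit_bounds.
rewrite rnorm2_comb /a_min; case: ifP => _; apply: le_div_sqrt => //.
- by rewrite divr_ge0 ?mulr_ge0 //; move: W0 V0 hV1; lra.
- apply: le_trans major_axis_le_specnorm; rewrite ler_sqrt; last first.
    by rewrite mulr_ge0 ?dot_ge0 //; move: W0; lra.
  apply: (@le_trans _ _ ((1 + W) / 2 * ((1 - V) / 2))); last first.
    by rewrite ler_wpM2l ?dotPP_ge //; move: W0; lra.
  rewrite (_ : (1 + W) / 2 * _ = (1 + W) * (1 - V) / (2 * (1 + V)) * ((1 + V) / 2)).
    by rewrite ler_wpM2l // divr_ge0 ?mulr_ge0 //; move: W0 V0 hV1; lra.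
  by field; move: V0; lra.
- by move: W1; lra.
- exact: direction_le_specnorm.
Qed.

Lemma ratio_eq_amax : dot P Q = 0 -> dot P P = (1 + V) / 2 -> x0 = 0 ->
  specnorm Th / rnorm2 Tu = a_max V W.
Proof.
move=> hpq hpp hx; apply/eqP; rewrite eq_le ratio_le_amax /=.
have hD : D = (1 - V) / 2.
  move: hxy0; rewrite qformE hpq hx expr0n /= add0r => ->.
  by move: hPQ; rewrite hpp; lra.
rewrite rnorm2_comb /a_max; apply: le_div_sqrt => //.
  by rewrite divr_ge0 ?mulr_ge0 //; move: W0 V0 hV1; lra.
apply: le_trans major_axis_le_specnorm.
by rewrite hD hpp (_ : _ * _ = (1 + W) / 2 * ((1 + V) / 2)) //; field; move: hV1; lra.
Qed.

Lemma ratio_eq_amin : dot P Q = 0 -> dot P P = (1 - V) / 2 -> x0 = 0 ->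
  specnorm Th / rnorm2 Tu = a_min V W.
Proof.
move=> hpq hpp hx; apply/eqP; rewrite eq_le amin_le_ratio andbT.
have hqq : dot Q Q = (1 + V) / 2 by move: hPQ; rewrite hpp; lra.
have hD : D = (1 + V) / 2.
  by move: hxy0; rewrite qformE hpq hx expr0n /= add0r => ->; lra.
have Dp : 0 < (1 + V) / 2 by move: V0; lra.
rewrite rnorm2_comb /a_min hD; case: ifPn => hVW; apply: div_sqrt_le => //.
- by rewrite divr_ge0 ?mulr_ge0 //; move: W0 V0 hV1; lra.
- apply: diagonal_specnorm_le; rewrite // ?hpp ?hqq.
    by rewrite le_eqVlt; apply/orP; left; apply/eqP; field; move: V0; lra.
  rewrite (_ : _ * ((1 + V) / 2) = (1 + W) * (1 - V) / 4); first by move: hVW; nra.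
  by field; move: V0; lra.
- by move: W1; lra.
- apply: diagonal_specnorm_le; rewrite // ?hpp ?hqq //.
  by move: hVW; rewrite -ltNge; nra.
Qed.
End Ratio.

Section Trigonometry.
Variable R : realType.

Lemma sin_int_pi (k : int) : sin (k%:~R * pi) = 0 :> R.
Proof.
have sin_nat_pi (m : nat) : sin (m%:R * pi) = 0 :> R.
  elim: m => [|m IH]; first by rewrite mul0r sin0.
  by rewrite -natr1 mulrDl mul1r sinDpi IH oppr0.
case: k => m; first by rewrite -pmulrn sin_nat_pi.
by rewrite NegzE mulrNz mulNr sinN -pmulrn sin_nat_pi oppr0.
Qed.

Lemma cos_odd_pihalf (k : int) : cos ((2 * k + 1)%:~R * (pi / 2)) = 0 :> R.
Proof.
have -> : (2 * k + 1)%:~R * (pi / 2) = k%:~R * pi + pi / 2 :> R.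
  by rewrite intrD intrM /=; field.
by rewrite cosDpihalf sin_int_pi oppr0.
Qed.

Lemma angle_exists (X Y : R) : X ^+ 2 + Y ^+ 2 = 1 -> exists psi, cos psi = X /\ sin psi = Y.
Proof.
move=> h.
have hX : -1 <= X <= 1 by apply/andP; split; nra.
have cX : cos (acos X) = X by apply: acosK; rewrite in_itv /=.
have sX : sin (acos X) = `|Y|.
  by rewrite sin_acos // -sqrtr_sqr; congr Num.sqrt; lra.
case: (lerP 0 Y) => hY.
  by exists (acos X); rewrite cX sX ger0_norm.
by exists (- acos X); rewrite cosN sinN cX sX ltr0_norm ?opprK.
Qed.
End Trigonometry.

(* The rotation aligning [a cos - b sin] with a principal axis of the ellipse it traces. *)
Lemma principal_rotation (R : realType) n (a b : 'I_n -> R) (sg : R) : sg ^+ 2 = 1 ->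
  exists psi, dot (rot_re psi a b) (rot_im psi a b) = 0 /\
    dot (rot_re psi a b) (rot_re psi a b) - dot (rot_im psi a b) (rot_im psi a b) = sg * disc a b.
Proof.
move=> hsg; set X := dot a a - dot b b; set Y := 2 * dot a b.
have hV := sqr_disc a b; rewrite -/X -/Y in hV.
suff [phi [hX hY]] : exists phi, cos phi * X - sin phi * Y = sg * disc a b /\
    sin phi * X + cos phi * Y = 0.
  have e : 2 * (phi / 2) = phi by field.
  exists (phi / 2); have := dot_rot_diff (phi / 2) a b; have := dot_rot_cross (phi / 2) a b.
  by rewrite e -/X -/Y hX hY => hc hd; split; lra.
have [V0|Vn0] := eqVneq (disc a b) 0.
  have [-> ->] : X = 0 /\ Y = 0 by move: hV; rewrite V0; split; nra.
  by exists 0; rewrite V0 !mulr0 subr0 addr0.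
have [phi [hc hs]] : exists phi, cos phi = sg * X / disc a b /\ sin phi = - (sg * Y / disc a b).
  apply: angle_exists; rewrite sqrrN !expr_div_n ![(sg * _) ^+ 2]exprMn hsg !mul1r -mulrDl -hV.
  by rewrite divff // sqrf_eq0.
exists phi; rewrite hc hs; split.
  by rewrite -[disc a b in RHS](mulfK Vn0) -expr2 hV; field.
by field.
Qed.

Section ComplexVectors.
Variables (R : realType) (n : nat).
Implicit Types (f : 'I_n -> R[i]) (z : R[i]).

Lemma Re_sum f : complex.Re (\sum_k f k) = \sum_k complex.Re (f k).
Proof. by apply: (big_morph _ (fun x y => _) (erefl _)) => -[? ?] [? ?]. Qed.

Lemma Im_sum f : complex.Im (\sum_k f k) = \sum_k complex.Im (f k).
Proof. by apply: (big_morph _ (fun x y => _) (erefl _)) => -[? ?] [? ?]. Qed.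

Lemma ReM z1 z2 : complex.Re (z1 * z2) = complex.Re z1 * complex.Re z2 - complex.Im z1 * complex.Im z2.
Proof. by case: z1 z2 => [? ?] [? ?]. Qed.

Lemma ImM z1 z2 : complex.Im (z1 * z2) = complex.Re z1 * complex.Im z2 + complex.Im z1 * complex.Re z2.
Proof. by case: z1 z2 => [? ?] [? ?]. Qed.

Lemma Re_realM (r : R) z : complex.Re (Complex r 0 * z) = r * complex.Re z.
Proof. by case: z => x y /=; rewrite mul0r subr0. Qed.

Lemma Im_realM (r : R) z : complex.Im (Complex r 0 * z) = r * complex.Im z.
Proof. by case: z => x y /=; rewrite mul0r addr0. Qed.

Lemma cmod_sqr z : cmod z ^+ 2 = complex.Re z ^+ 2 + complex.Im z ^+ 2.
Proof. by rewrite /cmod sqr_sqrtr // addr_ge0 ?sqr_ge0. Qed.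

Lemma dot_re_im f : dot (fun k => complex.Re (f k)) (fun k => complex.Re (f k)) +
  dot (fun k => complex.Im (f k)) (fun k => complex.Im (f k)) = \sum_k cmod (f k) ^+ 2.
Proof. by rewrite -big_split; apply: eq_bigr => k _; rewrite cmod_sqr !expr2. Qed.

Lemma cmod_sum_sqr f : cmod (\sum_k f k * f k) =
  disc (fun k => complex.Re (f k)) (fun k => complex.Im (f k)).
Proof.
rewrite /cmod /disc Re_sum Im_sum; congr (Num.sqrt (_ ^+ 2 + _ ^+ 2)).
  by rewrite /dot -sumrB; apply: eq_bigr => k _; rewrite ReM.
by rewrite /dot mulr_sumr; apply: eq_bigr => k _; rewrite ImM; ring.
Qed.

Lemma disc_lt1_eigen (K : 'I_n -> 'I_n -> R) f lam : complex.Im lam != 0 ->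
  (forall k, \sum_j Complex (K k j) 0 * f j = lam * f k) ->
  \sum_k cmod (f k) ^+ 2 = 1 ->
  disc (fun k => complex.Re (f k)) (fun k => complex.Im (f k)) < 1.
Proof.
move=> lam0 hK hf; rewrite -dot_re_im in hf; apply: disc_lt1 => //.
apply: (cauchy_schwarz_lt_eigen (K := K) (mu := complex.Re lam)) lam0 _ _ hf => k.
- have := congr1 (@complex.Re R) (hK k); rewrite Re_sum ReM => <-.
  by apply: eq_bigr => j _; rewrite Re_realM.
- have := congr1 (@complex.Im R) (hK k); rewrite Im_sum ImM addrC => <-.
  by apply: eq_bigr => j _; rewrite Im_realM.
Qed.
End ComplexVectors.

Lemma sum_cmod_normalize (R : realType) m n (x : 'M[R[i]]_(m, n)) : x != 0 ->
  \sum_i \sum_j cmod ((Complex (cnorm2 x)^-1 0 *: x) i j) ^+ 2 = 1.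
Proof.
move=> x0; set S := \sum_i \sum_j cmod (x i j) ^+ 2.
have S0 : 0 < S.
  have [i [j xij]] : exists i j, x i j != 0.
    case: (pselect (exists i j, x i j != 0)) => // h; exfalso.
    move/eqP: x0; apply; apply/matrixP => i j; rewrite mxE.
    by apply/eqP/negPn/negP => hij; apply: h; exists i, j.
  have hij : 0 < cmod (x i j) ^+ 2.
    rewrite cmod_sqr lt_def addr_ge0 ?sqr_ge0 // andbT paddr_eq0 ?sqr_ge0 // !sqrf_eq0.
    by move: xij; apply: contra; case: (x i j) => ? ? /= /andP[/eqP-> /eqP->].
  rewrite /S (bigD1 i) //= (bigD1 j) //=.
  apply: lt_le_trans hij _; rewrite -addrA lerDl.
  by rewrite addr_ge0 ?sumr_ge0 // => *; rewrite ?sumr_ge0 // => *; exact: sqr_ge0.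
rewrite -[RHS](divff (lt0r_neq0 S0)) /S mulr_suml; apply: eq_bigr => i _.
rewrite mulr_suml; apply: eq_bigr => j _.
rewrite mxE !cmod_sqr Re_realM Im_realM /cnorm2 -/S; set r := (Num.sqrt S)^-1.
have hr : r ^+ 2 = S^-1 by rewrite exprVn sqr_sqrtr // ltW.
by rewrite !exprMn -mulrDr hr mulrC.
Qed.

Section PrincipalAxes.
Variables (R : realType) (n : nat) (c0 d0 : 'I_n -> R) (th : R).
Local Notation R1 := (\matrix_(i < 2, j < n) (if i == ord0 then c0 j else d0 j)).
Local Notation c := (rot_re (- th) c0 d0).
Local Notation d := (rot_im (- th) c0 d0).

Lemma rnorm2_R1 (u : 'cV[R]_n) :
  rnorm2 (R1 *m u) = Num.sqrt (dot c0 (colv u) ^+ 2 + dot d0 (colv u) ^+ 2).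
Proof.
rewrite /rnorm2 big_ord_recl big_ord1 big_ord1 !big_ord1 !mxE.
by congr (Num.sqrt (_ ^+ 2 + _ ^+ 2)); apply: eq_bigr => l _; rewrite mxE.
Qed.

Lemma R1_gram_eigen (l : R) :
  R1 *m R1^T *m (\col_(i < 2) (if i == ord0 then cos th else sin th)) =
    l *: (\col_(i < 2) (if i == ord0 then cos th else sin th)) ->
  dot c0 c0 * cos th + dot c0 d0 * sin th = l * cos th /\
  dot c0 d0 * cos th + dot d0 d0 * sin th = l * sin th.
Proof.
move=> h.
have := congr1 (fun X : 'cV[R]_2 => X ord0 ord0) h.
have := congr1 (fun X : 'cV[R]_2 => X (lift ord0 ord0) ord0) h.
rewrite /= !mxE !big_ord_recl !big_ord0 !addr0 !mxE /=.
have gram (i j : 'I_2) : \sum_k R1 i k * R1^T k j =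
    dot (if i == ord0 then c0 else d0) (if j == ord0 then c0 else d0).
  by apply: eq_bigr => k _; rewrite !mxE; case: (i == ord0); case: (j == ord0).
by rewrite !gram /= [dot d0 c0]dotC => -> ->.
Qed.

Lemma principal_frame_eigen (l : R) :
  dot c0 c0 * cos th + dot c0 d0 * sin th = l * cos th ->
  dot c0 d0 * cos th + dot d0 d0 * sin th = l * sin th ->
  dot c c = l /\ dot c d = 0.
Proof.
move=> e1 e2; rewrite ?dot_rot_re ?dot_rot_im ![dot _ c]dotC ![dot _ d]dotC.
rewrite ?dot_rot_re ?dot_rot_im cosN sinN [dot d0 c0]dotC; split.
  transitivity (cos th * (l * cos th) + sin th * (l * sin th)); first by rewrite -e1 -e2; ring.
  by rewrite -[RHS]mulr1 -(cos2Dsin2 th); ring.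
transitivity (cos th * (l * sin th) - sin th * (l * cos th)); first by rewrite -e1 -e2; ring.
by ring.
Qed.

Lemma principal_frame : dot c0 c0 + dot d0 d0 = 1 -> disc c0 d0 < 1 ->
  R1 *m R1^T *m (\col_(i < 2) (if i == ord0 then cos th else sin th)) =
    specnorm R1 ^+ 2 *: (\col_(i < 2) (if i == ord0 then cos th else sin th)) ->
  [/\ dot c d = 0, dot c c = (1 + disc c0 d0) / 2 & dot d d = (1 - disc c0 d0) / 2].
Proof.
move=> hN hW /R1_gram_eigen[e1 e2].
have [hcc hcd] := principal_frame_eigen e1 e2.
move: (specnorm R1) hcc e1 e2 (@le_specnorm _ _ _ R1) => sg hcc _ _ le_sg.
have hdd : dot d d = 1 - sg ^+ 2 by move: (dot_rot_trace (- th) c0 d0); rewrite hN hcc; lra.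
have hWl : disc c0 d0 = `|2 * sg ^+ 2 - 1|.
  rewrite -(disc_rot (- th)) /disc hcc hdd hcd mulr0 expr0n addr0 -sqrtr_sqr.
  by congr (Num.sqrt (_ ^+ 2)); ring.
have /andP[l0 l1] : 0 < sg ^+ 2 < 1.
  by move: hW; rewrite hWl ltr_norml => /andP[h1 h2]; apply/andP; split; lra.
have cc0 : 0 < dot c c by rewrite hcc.
have dd0 : 0 < dot d d by rewrite hdd subr_gt0.
have [|u [hu hx hy]] := ellipse_attained hcd cc0 dd0 (x := 0) (y := Num.sqrt (1 - sg ^+ 2)).
  by rewrite expr0n /= mul0r add0r sqr_sqrtr -?hdd ?divff ?gt_eqF // ltW.
have R1_le1 (v : 'cV[R]_n) : rnorm2 v = 1 -> rnorm2 (R1 *m v) <= 1.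
  move=> hv; rewrite rnorm2_R1 -(dot_rot_sqr (- th)) -sqrtr1 ler_sqrt //.
  by apply: ellipse_sqr_le cc0 dd0 (bessel2_unit hcd cc0 dd0 hv) _ _; rewrite ?hcc ?hdd; lra.
have := le_sg _ _ R1_le1 hu; rewrite rnorm2_R1 -(dot_rot_sqr (- th)) hx hy.
rewrite expr0n add0r /= sqrtr_sqr ger0_norm ?sqrtr_ge0 // => hsg.
(* [th] is the major axis: [sg^2 = |c|^2] dominates [|d|^2], which [R1] attains. *)
have hl : 1 - sg ^+ 2 <= sg ^+ 2.
  have s0 := sqrtr_ge0 (1 - sg ^+ 2); have := sqr_sqrtr (ltW dd0); rewrite hdd; nra.
rewrite hWl ger0_norm; last lra.
by split => //; [rewrite hcc | rewrite hdd]; lra.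
Qed.
End PrincipalAxes.

Section UnitEigenvector.
Variables (R : realType) (n : nat) (A : 'M[R]_n) (lam : R[i]).
Hypothesis lam_nonreal : complex.Im lam != 0.

Lemma unit_col_eigen (v : 'cV[R[i]]_n) : v != 0 -> cplx_mx A *m v = lam *: v ->
  let x := Complex (cnorm2 v)^-1 0 *: v in
  let a k := complex.Re (x k ord0) in let b k := complex.Im (x k ord0) in
  [/\ dot a a + dot b b = 1, cmod ((x^T *m x) ord0 ord0) = disc a b & disc a b < 1].
Proof.
move=> v0 hv x a b.
have nx : \sum_k cmod (x k ord0) ^+ 2 = 1.
  by rewrite -(sum_cmod_normalize v0); apply: eq_bigr => k _; rewrite big_ord1.
have hx : cplx_mx A *m x = lam *: x by rewrite /x -scalemxAr hv !scalerA mulrC.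
split; first by rewrite (dot_re_im (fun k => x k ord0)).
  rewrite -(cmod_sum_sqr (fun k => x k ord0)) mxE.
  by congr cmod; apply: eq_bigr => k _; rewrite mxE.
apply: (disc_lt1_eigen (K := A) lam_nonreal _ nx) => k.
have := congr1 (fun M : 'cV_n => M k ord0) hx; rewrite /= [LHS]mxE [RHS]mxE => <-.
by apply: eq_bigr => j _; rewrite /cplx_mx [map_mx _ _ _ _]mxE.
Qed.

Lemma unit_row_eigen (w : 'rV[R[i]]_n) : w != 0 -> w *m cplx_mx A = lam *: w ->
  let x := Complex (cnorm2 w)^-1 0 *: w in
  let c k := complex.Re (x ord0 k) in let d k := complex.Im (x ord0 k) in
  [/\ dot c c + dot d d = 1, cmod ((x *m x^T) ord0 ord0) = disc c d & disc c d < 1].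
Proof.
move=> w0 hw x c d.
have nx : \sum_k cmod (x ord0 k) ^+ 2 = 1 by rewrite -(sum_cmod_normalize w0) big_ord1.
have hx : x *m cplx_mx A = lam *: x by rewrite /x -scalemxAl hw !scalerA mulrC.
split; first by rewrite (dot_re_im (fun k => x ord0 k)).
  rewrite -(cmod_sum_sqr (fun k => x ord0 k)) mxE.
  by congr cmod; apply: eq_bigr => k _; rewrite [x^T _ _]mxE.
apply: (disc_lt1_eigen (K := fun l j => A j l) lam_nonreal _ nx) => l.
have := congr1 (fun M : 'rV_n => M ord0 l) hx; rewrite /= [LHS]mxE [RHS]mxE => <-.
by apply: eq_bigr => j _; rewrite /cplx_mx [map_mx _ _ _ _]mxE mulrC.
Qed.
End UnitEigenvector.

(* Writing [x = r e^(i alpha)] and [y = rho e^(i beta)], the matrix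
   [(r_k rho_l cos (ph + alpha_k + beta_l))] is [P c^T - Q d^T] for the real and imaginary
   parts [P, Q] of [e^(i (ph + th)) x] and [c, d] of [e^(-i th) y]. *)
Lemma polar_ratio (R : realType) n (x y : 'I_n -> R[i]) (r rho alpha beta : 'I_n -> R)
    (ph th gam : R) :
  (forall k, x k = Complex (r k) 0 * expi (alpha k)) ->
  (forall l, y l = Complex (rho l) 0 * expi (beta l)) ->
  let P := rot_re (ph + th) (fun k => complex.Re (x k)) (fun k => complex.Im (x k)) in
  let Q := rot_im (ph + th) (fun k => complex.Re (x k)) (fun k => complex.Im (x k)) in
  let c := rot_re (- th) (fun l => complex.Re (y l)) (fun l => complex.Im (y l)) in
  let d := rot_im (- th) (fun l => complex.Re (y l)) (fun l => complex.Im (y l)) in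
  specnorm (\matrix_(k, l) (r k * rho l * cos (ph + alpha k + beta l))) /
    rnorm2 (\col_k (r k * cos (ph + alpha k + gam))) =
  specnorm (\matrix_(k, l) (P k * c l - Q k * d l)) /
    rnorm2 (\col_k (P k * cos (gam - th) - Q k * sin (gam - th))).
Proof.
move=> hx hy P Q c d.
have ha k : complex.Re (x k) = r k * cos (alpha k) by rewrite hx Re_realM.
have hb k : complex.Im (x k) = r k * sin (alpha k) by rewrite hx Im_realM.
have hc l : complex.Re (y l) = rho l * cos (beta l) by rewrite hy Re_realM.
have hd l : complex.Im (y l) = rho l * sin (beta l) by rewrite hy Im_realM.
have angles (a b : R) : ph + a + b = (a + (ph + th)) + (b + - th) by ring.
congr (_ / _); apply: congr1; apply/matrixP => k l; rewrite !mxE /P /Q ?/c ?/d.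
  have [-> ->] := rot_polar (ph + th) ha hb k; have [-> ->] := rot_polar (- th) hc hd l.
  by rewrite angles cosD; ring.
have [-> ->] := rot_polar (ph + th) ha hb k.
by rewrite angles cosD; ring.
Qed.

Lemma principal_time (R : realType) n (a b : 'I_n -> R) (om th sg : R) :
  om != 0 -> sg ^+ 2 = 1 -> dot a a + dot b b = 1 ->
  exists t, dot (rot_re (om * t + th) a b) (rot_im (om * t + th) a b) = 0 /\
    dot (rot_re (om * t + th) a b) (rot_re (om * t + th) a b) = (1 + sg * disc a b) / 2.
Proof.
move=> om0 /(principal_rotation a b)[psi [h1 h2]] hab; exists ((psi - th) / om).
rewrite (_ : om * ((psi - th) / om) + th = psi); last by field.
by split => //; move: h2 (dot_rot_trace psi a b); rewrite hab; lra.
Qed.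

Theorem theorem10 (R : realType) (n : nat) (A : 'M[R]_n) (lam : R[i])
  (w : 'rV[R[i]]_n) (v : 'cV[R[i]]_n) (y0 : 'cV[R]_n)
  (alpha beta : 'I_n -> R) (gam theta : R) :
  Lambda1_complex A lam ->
  w != 0 -> w *m cplx_mx A = lam *: w ->
  v != 0 -> cplx_mx A *m v = lam *: v ->
  let om := complex.Im lam in
  let wh := (Complex (cnorm2 w)^-1 0) *: w in
  let vh := (Complex (cnorm2 v)^-1 0) *: v in
  let yh := (rnorm2 y0)^-1 *: y0 in
  let V1 := cmod ((vh^T *m vh) ord0 ord0) in
  let W1 := cmod ((wh *m wh^T) ord0 ord0) in
  (w *m cplx_mx y0) ord0 ord0 != 0 ->
  (* polar forms of vh_k, wh_l and wh*yh *)
  (forall k, vh k ord0 = Complex (cmod (vh k ord0)) 0 * expi (alpha k)) ->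
  (forall l, wh ord0 l = Complex (cmod (wh ord0 l)) 0 * expi (beta l)) ->
  (wh *m cplx_mx yh) ord0 ord0
    = Complex (cmod ((wh *m cplx_mx yh) ord0 ord0)) 0 * expi gam ->
  (* theta: angle of the left singular vector of R1 for its largest
     singular value sigma1 *)
  let R1 : 'M[R]_(2, n) :=
    \matrix_(i < 2, j < n) (if i == ord0 then complex.Re (wh ord0 j) else complex.Im (wh ord0 j)) in
  let sigma1 := specnorm R1 in
  let a1 : 'cV[R]_2 := \col_(i < 2) (if i == ord0 then cos theta else sin theta) in
  R1 *m R1^T *m a1 = sigma1 ^+ 2 *: a1 ->
  let Theta_u (t : R) : 'cV[R]_n :=
    \col_(k < n) (cmod (vh k ord0) * cos (om * t + alpha k + gam)) in
  let Theta (t : R) : 'M[R]_n :=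
    \matrix_(k < n, l < n)
      (cmod (vh k ord0) * cmod (wh ord0 l) * cos (om * t + alpha k + beta l)) in
  let OT (t : R) := specnorm (Theta t) / rnorm2 (Theta_u t) in
  (forall t, a_min V1 W1 <= OT t <= a_max V1 W1) /\
  ((exists k : int, gam - theta = (2 * k + 1)%:~R * (pi / 2)) ->
     (exists t, OT t = a_min V1 W1) /\ (exists t, OT t = a_max V1 W1)).
Proof.
(* The bounds hold for every angle [gam]. *)
move=> [_ om_gt0 _ _ _] w0 hw v0 hv om wh vh yh V1 W1 _ halpha hbeta _
  R1 sigma1 a1 heig Theta_u Theta OT.
have om0 : om != 0 by rewrite gt_eqF.
pose a k := complex.Re (vh k ord0); pose b k := complex.Im (vh k ord0).
pose c0 l := complex.Re (wh ord0 l); pose d0 l := complex.Im (wh ord0 l).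
have [nab hV1 V1_lt1] : [/\ dot a a + dot b b = 1, V1 = disc a b & disc a b < 1] :=
  unit_col_eigen om0 v0 hv.
have [ncd hW1 W1_lt1] : [/\ dot c0 c0 + dot d0 d0 = 1, W1 = disc c0 d0 & disc c0 d0 < 1] :=
  unit_row_eigen om0 w0 hw.
have [cd0 hcc hdd] := principal_frame ncd W1_lt1 heig.
pose P t := rot_re (om * t + theta) a b; pose Q t := rot_im (om * t + theta) a b.
have OTE t : OT t = specnorm (\matrix_(k, l)
      (P t k * rot_re (- theta) c0 d0 l - Q t k * rot_im (- theta) c0 d0 l)) /
    rnorm2 (\col_k (P t k * cos (gam - theta) - Q t k * sin (gam - theta))).
  exact: polar_ratio (om * t) theta gam halpha hbeta.
have hPQ t : dot (P t) (P t) + dot (Q t) (Q t) = 1 by rewrite dot_rot_trace.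
have hVt t : disc (P t) (Q t) = V1 by rewrite disc_rot hV1.
have W0 := disc_ge0 c0 d0; have hxy0 := cos2Dsin2 (gam - theta).
rewrite hW1; split => [t | [k hk]].
  by rewrite OTE -(hVt t) amin_le_ratio ?ratio_le_amax ?hPQ ?hVt ?hV1.
have x0 : cos (gam - theta) = 0 by rewrite hk cos_odd_pihalf.
split.
  have [t [h1 h2]] := principal_time theta om0 (etrans (sqrrN 1) (expr1n _ 2)) nab.
  exists t; rewrite OTE -(hVt t); apply: ratio_eq_amin; rewrite ?hPQ ?hVt ?hV1 ?h2 //; lra.
have [t [h1 h2]] := principal_time theta om0 (expr1n _ 2) nab.
exists t; rewrite OTE -(hVt t); apply: ratio_eq_amax; rewrite ?hPQ ?hVt ?hV1 ?h2 //; lra.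
Qed.
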